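(* For complex $a,c$ with $|ac|<|q|$, \begin{align*} \sum_{n=0}^\infty \bigl(1-q^{4n+2}\bigr) \frac{\bigl(q^2/a, q^2/c; q^2\bigr)_n}{\bigl(q^2 a, q^2c; q^2\bigr)_n} (ac)^n \sum_{j=-n}^n (-1)^j q^{n^2-n-j^2} =\frac{2\bigl(q^2, ac; q^2\bigr)_\infty}{\bigl(q^2 a, q^2 c; q^2\bigr)_\infty}\sum_{n=0}^\infty \frac{\bigl(q^2/a, q^2/c; q^2\bigr)_n}{\bigl(1+q^{2n}\bigr)\bigl(-q, q^2; q^2\bigr)_n }\biggl(-\frac{ac}{q}\biggr)^n. \end{align*}
   Context: Throughout, $q$ is a complex number with $0<|q|<1$. For $x\in\mathbb{C}$, $(x;q^2)_\infty=\prod_{k=0}^\infty(1-xq^{2k})$ and, for an integer $n\ge 0$, $(x;q^2)_n=\prod_{k=0}^{n-1}(1-xq^{2k})$; also $(x_1,\dots,x_m;q^2)_n=(x_1;q^2)_n\cdots(x_m;q^2)_n$ for $n$ an integer or $\infty$. *)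

From Stdlib Require Import Reals ZArith ClassicalEpsilon.
From Coquelicot Require Import Coquelicot.
Open Scope C_scope.

Fixpoint qpoch (x p : C) (n : nat) : C :=
  match n with
  | O => 1
  | S m => qpoch x p m * (1 - x * pow_n p m)
  end.

(* infinite q-Pochhammer symbol (x; p)_oo : the limit of the partial products
   (chosen by Hilbert's epsilon; it is the genuine limit whenever it exists,
   which is the case for |p| < 1) *)
Definition qpinf (x p : C) : C :=
  epsilon (inhabits (0 : C))
    (fun l => filterlim (fun N => qpoch x p N) eventually (locally l)).

Definition zpowC (x : C) (z : Z) : C :=
  if (0 <=? z)%Z then pow_n x (Z.to_nat z) else / pow_n x (Z.to_nat (- z)).

(* sum_{j=-n}^{n} (-1)^j q^(n^2 - n - j^2), reindexed by j = k - n, k = 0..2n *)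
Definition inner_sum (q : C) (n : nat) : C :=
  sum_n (fun k : nat =>
           let j := (Z.of_nat k - Z.of_nat n)%Z in
           zpowC (-1) j * zpowC q (Z.of_nat n * Z.of_nat n - Z.of_nat n - j * j)%Z)
        (2 * n).

From Stdlib Require Import Reals ZArith Lra Lia Psatz ClassicalEpsilon.
From Coquelicot Require Import Coquelicot.
Open Scope C_scope.

(* Write p = q^2 and z = ac.  Both sides are sums of the triangular array

     X(n,r) = (p/a, p/c; p)_n z^n (1 - p^(2r+1)) I_r / ((p;p)_(n-r) (p;p)_(n+r+1)),   r <= n,

   where I_r is the inner sum over j.

   - Rows.  Folding j <-> -j gives I_r = q^(-r) sum_(e<=r) c_e (-1)^e q^(r^2-e^2) with
     c_0 = 1 and c_e = 2 otherwise.  Once r and e are exchanged the sum over r telescopes,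
     and what is left is the Rogers-Szego polynomial sum_i [2n choose i]_p x^i at x = -q,
     known from its three-term recurrence.  Row n sums to twice the n-th term on the right.
   - Columns.  Column r is a q-Gauss series; Heine's proof (iterate the contiguous relation
     c -> c p and use F(c p^K) -> 1 as K -> oo) shows that it sums to the r-th term on
     the left times (p a, p c; p)_oo / (p, z; p)_oo.
   - As |X(n,r)| = O(|z|^n / |q|^r) with |z| < |q|, Tannery's theorem lets the two
     summations be exchanged. *)

Lemma pow_n_Cpow (x : C) (n : nat) : pow_n x n = x ^ n.
Proof. induction n as [|n IH]; simpl; rewrite ?IH; reflexivity. Qed.

Lemma C1_neq_0 : (1 : C) <> 0.
Proof. intros E. apply (f_equal fst) in E. simpl in E. lra. Qed.

Lemma C2_neq_0 : (2 : C) <> 0.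
Proof. intros E. apply (f_equal fst) in E. simpl in E. lra. Qed.

Lemma Copp_neq_0 (x : C) : x <> 0 -> - x <> 0.
Proof. intros Hx E. apply Hx. replace x with (- - x) by ring. rewrite E. ring. Qed.

Lemma Cdiv_neq_0 (x y : C) : x <> 0 -> y <> 0 -> x / y <> 0.
Proof. intros Hx Hy E. apply Hx. replace x with (x / y * y) by (field; auto). rewrite E. ring. Qed.

Lemma Cmult_eq_reg_l (c x y : C) : c * x = c * y -> c <> 0 -> x = y.
Proof. intros E Hc. replace x with (/ c * (c * x)) by (field; auto). rewrite E. field. auto. Qed.

Lemma Cpow_split (x : C) (N i : nat) : (i <= N)%nat -> x ^ N = x ^ i * x ^ (N - i).
Proof. intros Hi. rewrite <- Cpow_add_r. f_equal. lia. Qed.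

Lemma Cmod_minus_le (x y : C) : (Cmod (x - y) <= Cmod x + Cmod y)%R.
Proof. eapply Rle_trans; [apply Cmod_triangle|]. rewrite Cmod_opp. lra. Qed.

Lemma Cmod_1_minus_ge (x : C) : (1 - Cmod x <= Cmod (1 - x))%R.
Proof.
  assert (H := Cmod_triangle (1 - x) x).
  replace (1 - x + x) with (1 : C) in H by ring. rewrite Cmod_1 in H. lra.
Qed.

Lemma Cmod_lt_1_neq_1 (y : C) : (Cmod y < 1)%R -> y <> 1.
Proof. intros H E. rewrite E, Cmod_1 in H. lra. Qed.

Lemma Cmod_pow_lt_1 (p : C) (k : nat) : (Cmod p < 1)%R -> (Cmod (p ^ S k) < 1)%R.
Proof.
  intros Hp. rewrite Cmod_pow.
  apply pow_lt_1_compat; [split; [apply Cmod_ge_0 | exact Hp] | lia].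
Qed.

Lemma Rpow_le_1 (x : R) (n : nat) : (0 <= x <= 1)%R -> (x ^ n <= 1)%R.
Proof. intros Hx. rewrite <- (pow1 n). apply pow_incr. exact Hx. Qed.

Lemma Rpow_le_antimono (x : R) (m n : nat) :
  (0 <= x <= 1)%R -> (m <= n)%nat -> (x ^ n <= x ^ m)%R.
Proof.
  intros Hx Hmn. replace n with (m + (n - m))%nat by lia. rewrite pow_add.
  assert (0 <= x ^ m)%R by (apply pow_le; lra).
  assert (x ^ (n - m) <= 1)%R by (apply Rpow_le_1, Hx).
  nra.
Qed.

Lemma Cmod_1_minus_pow_le_2 (p : C) (n : nat) : (Cmod p < 1)%R -> (Cmod (1 - p ^ n) <= 2)%R.
Proof.
  intros Hp. eapply Rle_trans; [apply Cmod_minus_le|]. rewrite Cmod_1, Cmod_pow.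
  assert (Cmod p ^ n <= 1)%R by (apply Rpow_le_1; split; [apply Cmod_ge_0 | lra]). lra.
Qed.

Lemma exp_le_mono (x y : R) : (x <= y)%R -> (exp x <= exp y)%R.
Proof. intros [H | ->]; [left; apply exp_increasing, H | lra]. Qed.

Lemma Rdiv_le_compat (x y u v : R) :
  (0 <= x <= y)%R -> (0 < u <= v)%R -> (x / v <= y / u)%R.
Proof.
  intros Hxy Huv. unfold Rdiv. apply Rmult_le_compat; try lra.
  - left. apply Rinv_0_lt_compat. lra.
  - apply Rinv_le_contravar; lra.
Qed.

(** Unlike [sum_n f n], which has [n+1] terms, [psum f n] has [n] terms and
    hence an empty case, which the telescoping arguments use. *)
Fixpoint psum (f : nat -> C) (n : nat) : C :=
  match n with O => 0 | S m => psum f m + f m end.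

Lemma psum_S (f : nat -> C) (n : nat) : psum f (S n) = psum f n + f n.
Proof. reflexivity. Qed.

Lemma psum_ext (f g : nat -> C) (n : nat) :
  (forall k, (k < n)%nat -> f k = g k) -> psum f n = psum g n.
Proof.
  induction n as [|n IH]; simpl; intros E; [reflexivity|].
  rewrite IH, E; auto with arith.
Qed.

Lemma psum_zero (n : nat) : psum (fun _ => 0) n = 0.
Proof. induction n as [|n IH]; simpl; [|rewrite IH]; ring. Qed.

Lemma psum_plus (f g : nat -> C) (n : nat) : psum (fun k => f k + g k) n = psum f n + psum g n.
Proof. induction n as [|n IH]; simpl; [ring|]. rewrite IH. ring. Qed.

Lemma psum_minus (f g : nat -> C) (n : nat) : psum (fun k => f k - g k) n = psum f n - psum g n.
Proof. induction n as [|n IH]; simpl; [ring|]. rewrite IH. ring. Qed.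

Lemma psum_scal_l (c : C) (f : nat -> C) (n : nat) : psum (fun k => c * f k) n = c * psum f n.
Proof. induction n as [|n IH]; simpl; [ring|]. rewrite IH. ring. Qed.

Lemma psum_scal_r (c : C) (f : nat -> C) (n : nat) : psum (fun k => f k * c) n = psum f n * c.
Proof. induction n as [|n IH]; simpl; [ring|]. rewrite IH. ring. Qed.

Lemma psum_shift (f : nat -> C) (n : nat) : psum f (S n) = f O + psum (fun k => f (S k)) n.
Proof. induction n as [|n IH]; [simpl; ring|]. simpl in *. rewrite IH. ring. Qed.

Lemma psum_add_range (f : nat -> C) (m n : nat) :
  psum f (m + n) = psum f m + psum (fun k => f (m + k)%nat) n.
Proof.
  induction n as [|n IH]; [rewrite Nat.add_0_r; simpl; ring|].
  rewrite Nat.add_succ_r. simpl. rewrite IH. ring.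
Qed.

Lemma psum_rev (f : nat -> C) (n : nat) : psum f n = psum (fun k => f (n - S k)%nat) n.
Proof.
  induction n as [|n IH]; [reflexivity|].
  rewrite (psum_shift (fun k => f (S n - S k)%nat)). simpl. rewrite IH, Nat.sub_0_r. ring.
Qed.

Lemma sum_n_psum (f : nat -> C) (n : nat) : sum_n f n = psum f (S n).
Proof.
  induction n as [|n IH]; [rewrite sum_O; simpl; ring|].
  rewrite sum_Sn, IH. reflexivity.
Qed.

Lemma psum_swap_triangle (h : nat -> nat -> C) (N : nat) :
  psum (fun n => psum (h n) (S n)) N = psum (fun r => psum (fun m => h (m + r)%nat r) (N - r)) N.
Proof.
  induction N as [|N IH]; [reflexivity|].
  rewrite psum_S, IH, (psum_S (fun r => psum (fun m => h (m + r)%nat r) (S N - r)) N).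
  replace (S N - N)%nat with 1%nat by lia.
  rewrite (psum_ext (fun r => psum (fun m => h (m + r)%nat r) (S N - r))
                    (fun r => psum (fun m => h (m + r)%nat r) (N - r) + h N r) N).
  - rewrite psum_plus. simpl. ring.
  - intros k Hk. replace (S N - k)%nat with (S (N - k)) by lia. simpl.
    do 2 f_equal. lia.
Qed.

Lemma psum_fold_middle (F : nat -> C) (n : nat) :
  psum F (S (2 * n)) = F n + psum (fun d => F (S n + d)%nat + F (n - S d)%nat) n.
Proof.
  revert F. induction n as [|n IH]; intros F; [simpl; ring|].
  replace (S (2 * S n)) with (S (S (S (2 * n)))) by lia.
  rewrite psum_shift, psum_S, (IH (fun k => F (S k))), psum_S, Nat.sub_diag.
  rewrite (psum_ext (fun d => F (S (S n + d)) + F (S (n - S d)))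
                    (fun d => F (S (S n) + d)%nat + F (S n - S d)%nat))
    by (intros k Hk; f_equal; f_equal; lia).
  replace (S (S n) + n)%nat with (S (S (2 * n))) by lia. ring.
Qed.

(** The cast makes numerals such as [0] on the right elaborate in [C]. *)
Notation "u --> l" := (filterlim u eventually (locally (l : C))) (at level 70).

Definition series_sum (u : nat -> C) : C :=
  epsilon (inhabits (0 : C)) (fun l => psum u --> l).

Lemma series_sum_spec (u : nat -> C) : (exists l, psum u --> l) -> psum u --> series_sum u.
Proof. exact (epsilon_spec (inhabits (0 : C)) _). Qed.

Lemma lim_iff_norm (u : nat -> C) (l : C) :
  u --> l <-> is_lim_seq (fun n => Cmod (u n - l)) 0%R.
Proof.
  rewrite <- is_lim_seq_spec, filterlim_locally_ball_norm.
  split; intros H eps; destruct (H eps) as [N HN]; exists N; intros n Hn;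
    specialize (HN n Hn); unfold ball_norm in *; simpl in *;
    rewrite Rminus_0_r, Rabs_pos_eq in * by apply Cmod_ge_0; exact HN.
Qed.

Lemma lim_unique (u : nat -> C) (l m : C) : u --> l -> u --> m -> l = m.
Proof. apply (filterlim_locally_unique (K := C_AbsRing) (V := C_NormedModule)). Qed.

Lemma lim_plus (u v : nat -> C) (l m : C) : u --> l -> v --> m -> (fun n => u n + v n) --> l + m.
Proof.
  intros Hu Hv. exact (filterlim_comp_2 u v Cplus Hu Hv (filterlim_plus (V := C_NormedModule) l m)).
Qed.

Lemma lim_mult (u v : nat -> C) (l m : C) : u --> l -> v --> m -> (fun n => u n * v n) --> l * m.
Proof.
  rewrite !lim_iff_norm. intros Hu Hv.
  apply (is_lim_seq_le_le (fun _ => 0%R) _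
    (fun n => Cmod (u n - l) * Cmod (v n - m) + Cmod l * Cmod (v n - m) + Cmod m * Cmod (u n - l))%R).
  - intros n. split; [apply Cmod_ge_0|].
    replace (u n * v n - l * m) with ((u n - l) * (v n - m) + l * (v n - m) + m * (u n - l)) by ring.
    rewrite <- !Cmod_mult. eapply Rle_trans; [apply Cmod_triangle|].
    apply Rplus_le_compat_r, Cmod_triangle.
  - apply is_lim_seq_const.
  - replace 0%R with (0 * 0 + Cmod l * 0 + Cmod m * 0)%R by ring.
    apply is_lim_seq_plus'; [apply is_lim_seq_plus'|];
      apply is_lim_seq_mult'; auto using is_lim_seq_const.
Qed.

Lemma lim_scal (c : C) (u : nat -> C) (l : C) : u --> l -> (fun n => c * u n) --> c * l.
Proof. apply lim_mult, filterlim_const. Qed.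

Lemma lim_minus (u v : nat -> C) (l m : C) : u --> l -> v --> m -> (fun n => u n - v n) --> l - m.
Proof.
  intros Hu Hv. apply (filterlim_ext (fun n => u n + RtoC (-1) * v n)); [intros; ring|].
  replace (l - m) with (l + RtoC (-1) * m) by ring. apply lim_plus; [exact Hu | apply lim_scal, Hv].
Qed.

Lemma lim_reindex (u : nat -> C) (l : C) (phi : nat -> nat) :
  (forall N, exists M, forall n, (M <= n)%nat -> (N <= phi n)%nat) ->
  u --> l -> (fun n => u (phi n)) --> l.
Proof.
  intros Hphi Hu. apply (filterlim_comp _ _ _ phi u eventually eventually); [|exact Hu].
  intros P [N HN]. destruct (Hphi N) as [M HM]. exists M. auto.
Qed.

Lemma lim_dominated_0 (u : nat -> C) (b : nat -> R) :
  (forall n, (Cmod (u n) <= b n)%R) -> is_lim_seq b 0%R -> u --> 0.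
Proof.
  intros Hb H0. apply lim_iff_norm.
  apply (is_lim_seq_le_le (fun _ => 0%R) _ b); auto using is_lim_seq_const.
  intros n. replace (u n - 0) with (u n) by ring. split; [apply Cmod_ge_0 | apply Hb].
Qed.

Lemma lim_norm_le (u : nat -> C) (l x : C) (B : R) :
  u --> l -> eventually (fun n => (Cmod (u n - x) <= B)%R) -> (Cmod (l - x) <= B)%R.
Proof.
  intros Hu HB. apply lim_iff_norm in Hu.
  assert (Hle : Rbar_le (Cmod (l - x)) (0 + B)%R).
  { apply (is_lim_seq_le_loc (fun _ => Cmod (l - x)) (fun n => Cmod (u n - l) + B)%R);
      [| apply is_lim_seq_const | apply is_lim_seq_plus'; auto using is_lim_seq_const].
    destruct HB as [N HN]. exists N. intros n Hn. specialize (HN n Hn).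
    replace (l - x) with (- (u n - l) + (u n - x)) by ring.
    eapply Rle_trans; [apply Cmod_triangle|]. rewrite Cmod_opp. lra. }
  simpl in Hle. lra.
Qed.

Lemma lim_psum (g : nat -> nat -> C) (G : nat -> C) (R : nat) :
  (forall r, (fun N => g N r) --> G r) -> (fun N => psum (g N) R) --> psum G R.
Proof.
  intros H. induction R as [|R IH]; simpl; [apply filterlim_const | apply lim_plus; auto].
Qed.

Lemma is_series_iff_psum (a : nat -> C) (l : C) : is_series a l <-> psum a --> l.
Proof.
  unfold is_series. split; intros H.
  - apply (filterlim_ext_loc (fun n => sum_n a (n - 1))).
    + exists 1%nat. intros n Hn. rewrite sum_n_psum. f_equal. lia.
    + apply (lim_reindex (sum_n a) l (fun n => n - 1)%nat); auto.
      intros N. exists (S N). lia.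
  - apply (filterlim_ext (fun n => psum a (S n))); [intros; symmetry; apply sum_n_psum|].
    apply (lim_reindex _ _ S); auto. intros N. exists N. lia.
Qed.

(** * Geometric domination and Tannery's theorem *)

Lemma is_lim_seq_geom_scal (D rho : R) :
  (0 <= rho < 1)%R -> is_lim_seq (fun n => D * rho ^ n)%R 0%R.
Proof.
  intros Hrho. replace (Finite 0) with (Rbar_mult D 0%R) by (simpl; f_equal; ring).
  apply is_lim_seq_scal_l, is_lim_seq_geom. rewrite Rabs_pos_eq; lra.
Qed.

Section GeometricDomination.
Variable rho : R.
Hypothesis Hrho : (0 <= rho < 1)%R.

Lemma psum_norm_le_geom (D : R) (b : nat -> C) (m : nat) : (0 <= D)%R ->
  (forall k, (k < m)%nat -> (Cmod (b k) <= D * rho ^ k)%R) ->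
  (Cmod (psum b m) <= D / (1 - rho))%R.
Proof.
  intros HD Hb.
  assert (Hpart : (Cmod (psum b m) <= D * (1 - rho ^ m) / (1 - rho))%R).
  { induction m as [|m IH]; simpl psum.
    - rewrite Cmod_0. simpl. right. field. lra.
    - eapply Rle_trans; [apply Cmod_triangle|].
      replace (D * (1 - rho ^ S m) / (1 - rho))%R with (D * (1 - rho ^ m) / (1 - rho) + D * rho ^ m)%R
        by (simpl; field; lra).
      apply Rplus_le_compat; auto. }
  eapply Rle_trans; [exact Hpart|].
  assert (0 <= rho ^ m)%R by (apply pow_le; lra).
  unfold Rdiv. apply Rmult_le_compat_r; [left; apply Rinv_0_lt_compat; lra | nra].
Qed.

Section Dominated.
Variables (D : R) (b : nat -> C).
Hypothesis Hb : forall k, (Cmod (b k) <= D * rho ^ k)%R.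

Lemma dominating_const_nonneg : (0 <= D)%R.
Proof. specialize (Hb O). simpl in Hb. generalize (Cmod_ge_0 (b O)). lra. Qed.

Lemma dominated_psum_cvg : exists l, psum b --> l.
Proof.
  destruct (ex_series_le (K := C_AbsRing) (V := C_CompleteNormedModule)
              b (fun n => D * rho ^ n)%R Hb) as [l Hl].
  - exists (D * / (1 - rho))%R. apply (is_series_scal_l (K := R_AbsRing) (V := R_NormedModule)).
    apply is_series_geom. rewrite Rabs_pos_eq; lra.
  - exists l. apply is_series_iff_psum. exact Hl.
Qed.

Lemma dominated_psum_tail_le (l : C) (R : nat) :
  psum b --> l -> (Cmod (l - psum b R) <= D * rho ^ R / (1 - rho))%R.
Proof.
  intros Hl. apply (lim_norm_le _ _ _ _ Hl). exists R. intros n Hn.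
  replace n with (R + (n - R))%nat by lia. rewrite psum_add_range.
  replace (psum b R + psum (fun k => b (R + k)%nat) (n - R) - psum b R)
    with (psum (fun k => b (R + k)%nat) (n - R)) by ring.
  apply psum_norm_le_geom.
  - apply Rmult_le_pos; [apply dominating_const_nonneg | apply pow_le; lra].
  - intros k _. rewrite Rmult_assoc, <- pow_add. apply Hb.
Qed.

End Dominated.

Theorem tannery (D : R) (g : nat -> nat -> C) (F G : nat -> C) :
  (forall N r, (Cmod (g N r) <= D * rho ^ r)%R) ->
  (forall N, psum (g N) --> F N) ->
  (forall r, (fun N => g N r) --> G r) ->
  exists L, psum G --> L /\ F --> L.
Proof.
  intros Hg HF HG.
  assert (HGb : forall r, (Cmod (G r) <= D * rho ^ r)%R).
  { intros r. replace (G r) with (G r - 0) by ring.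
    apply (lim_norm_le _ _ _ _ (HG r)). exists O. intros N _.
    replace (g N r - 0) with (g N r) by ring. apply Hg. }
  destruct (dominated_psum_cvg D G HGb) as [L HL]. exists L. split; [exact HL|].
  apply lim_iff_norm, is_lim_seq_spec. intros eps.
  set (e := pos_div_2 (pos_div_2 eps)).
  destruct (proj2 (is_lim_seq_spec _ _) (is_lim_seq_geom_scal (D / (1 - rho)) rho Hrho) e) as [R0 HR0].
  assert (Htail : (D * rho ^ R0 / (1 - rho) < e)%R).
  { specialize (HR0 R0 (le_n _)). rewrite Rminus_0_r in HR0.
    eapply Rle_lt_trans; [|exact HR0]. eapply Rle_trans; [|apply Rle_abs]. right. field. lra. }
  destruct (proj2 (is_lim_seq_spec _ _) (proj1 (lim_iff_norm _ _) (lim_psum g G R0 HG)) e) as [N1 HN1].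
  exists N1. intros N HN. specialize (HN1 N HN).
  rewrite Rminus_0_r, Rabs_pos_eq in * by apply Cmod_ge_0.
  (* Split at [R0]: both tails are below [e], and the heads are [e]-close. *)
  assert (T1 := dominated_psum_tail_le D (g N) (Hg N) (F N) R0 (HF N)).
  assert (T2 := dominated_psum_tail_le D G HGb L R0 HL).
  replace (F N - L) with ((F N - psum (g N) R0) + (psum (g N) R0 - psum G R0) - (L - psum G R0)) by ring.
  eapply Rle_lt_trans; [apply Cmod_minus_le|].
  eapply Rle_lt_trans; [apply Rplus_le_compat_r, Cmod_triangle|].
  unfold e in *. simpl in *. generalize (cond_pos eps). lra.
Qed.

End GeometricDomination.

(** * q-Pochhammer symbols *)

Lemma qpoch_S (x p : C) (n : nat) : qpoch x p (S n) = qpoch x p n * (1 - x * p ^ n).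
Proof. simpl. rewrite pow_n_Cpow. reflexivity. Qed.

Lemma qpoch_add (x p : C) (m n : nat) : qpoch x p (m + n) = qpoch x p m * qpoch (x * p ^ m) p n.
Proof.
  induction n as [|n IH]; [rewrite Nat.add_0_r; simpl; ring|].
  rewrite Nat.add_succ_r, !qpoch_S, IH, Cpow_add_r. ring.
Qed.

Lemma qpoch_neq_0 (x p : C) (n : nat) : (forall k, x * p ^ k <> 1) -> qpoch x p n <> 0.
Proof.
  intros Hx. induction n as [|n IH]; [apply C1_neq_0|].
  rewrite qpoch_S. apply Cmult_neq_0; [exact IH | apply Cminus_eq_contra, not_eq_sym, Hx].
Qed.

Lemma shifted_neq_1 (x p : C) (m : nat) :
  (forall k, x * p ^ k <> 1) -> forall k, x * p ^ m * p ^ k <> 1.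
Proof. intros Hx k. rewrite <- Cmult_assoc, <- Cpow_add_r. apply Hx. Qed.

Section QPochhammerEstimates.
Variables (x p : C).
Hypothesis Hp : (Cmod p < 1)%R.

Let geom_partial (n : nat) : R := (Cmod x * (1 - Cmod p ^ n) / (1 - Cmod p))%R.

Let geom_partial_S (n : nat) : geom_partial (S n) = (geom_partial n + Cmod x * Cmod p ^ n)%R.
Proof. unfold geom_partial. simpl. field. lra. Qed.

Let geom_partial_bounds (n : nat) : (0 <= geom_partial n <= Cmod x / (1 - Cmod p))%R.
Proof.
  unfold geom_partial.
  assert (0 <= Cmod p)%R by apply Cmod_ge_0. assert (0 <= Cmod x)%R by apply Cmod_ge_0.
  assert (0 <= Cmod p ^ n <= 1)%R.
  { split; [apply pow_le; lra | apply Rpow_le_1; lra]. }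
  split; [apply Rdiv_le_0_compat; [nra | lra] |].
  unfold Rdiv. apply Rmult_le_compat_r; [left; apply Rinv_0_lt_compat; lra | nra].
Qed.

Lemma qpoch_norm_le (n : nat) : (Cmod (qpoch x p n) <= exp (Cmod x / (1 - Cmod p)))%R.
Proof.
  assert (Hs : (Cmod (qpoch x p n) <= exp (geom_partial n))%R).
  { induction n as [|n IH].
    - simpl. rewrite Cmod_1. unfold geom_partial. simpl.
      rewrite Rminus_diag, Rmult_0_r, Rdiv_0_l, exp_0. lra.
    - rewrite qpoch_S, Cmod_mult, geom_partial_S, exp_plus.
      apply Rmult_le_compat; try apply Cmod_ge_0; auto.
      eapply Rle_trans; [apply Cmod_minus_le|]. rewrite Cmod_1, Cmod_mult, Cmod_pow.
      apply exp_ineq1_le. }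
  eapply Rle_trans; [exact Hs | apply exp_le_mono, geom_partial_bounds].
Qed.

Lemma qpoch_norm_ge (n : nat) : (1 - Cmod x / (1 - Cmod p) <= Cmod (qpoch x p n))%R.
Proof.
  enough (Hs : (1 - geom_partial n <= Cmod (qpoch x p n))%R)
    by (generalize (geom_partial_bounds n); lra).
  induction n as [|n IH]; [simpl; rewrite Cmod_1; unfold geom_partial; simpl; lra|].
  rewrite qpoch_S, Cmod_mult, geom_partial_S.
  assert (Hf := Cmod_1_minus_ge (x * p ^ n)). rewrite Cmod_mult, Cmod_pow in Hf.
  assert (0 <= Cmod x * Cmod p ^ n)%R
    by (apply Rmult_le_pos; [apply Cmod_ge_0 | apply pow_le, Cmod_ge_0]).
  assert (0 <= Cmod (qpoch x p n))%R by apply Cmod_ge_0.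
  assert (Hs := geom_partial_bounds n).
  destruct (Rle_or_lt (Cmod x * Cmod p ^ n) 1); [nra | ].
  apply Rle_trans with 0%R; [lra | apply Rmult_le_pos; apply Cmod_ge_0].
Qed.

End QPochhammerEstimates.

Section InfiniteProduct.
Variable p : C.
Hypothesis Hp : (Cmod p < 1)%R.

Lemma qpoch_shift_norm_le (x : C) (m n : nat) :
  (Cmod (qpoch (x * p ^ m) p n) <= exp (Cmod x / (1 - Cmod p)))%R.
Proof.
  eapply Rle_trans; [apply qpoch_norm_le, Hp | apply exp_le_mono].
  unfold Rdiv. apply Rmult_le_compat_r; [left; apply Rinv_0_lt_compat; lra|].
  rewrite Cmod_mult, Cmod_pow.
  assert (Cmod p ^ m <= 1)%R by (apply Rpow_le_1; split; [apply Cmod_ge_0 | lra]).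
  generalize (Cmod_ge_0 x) (pow_le (Cmod p) m (Cmod_ge_0 p)). nra.
Qed.

Lemma eventually_qpoch_shift_ge_half (x : C) :
  eventually (fun K => forall n, (1 / 2 <= Cmod (qpoch (x * p ^ K) p n))%R).
Proof.
  assert (Hlim := is_lim_seq_geom_scal (Cmod x / (1 - Cmod p)) (Cmod p) (conj (Cmod_ge_0 p) Hp)).
  destruct (proj2 (is_lim_seq_spec _ _) Hlim (mkposreal (1 / 2) ltac:(lra))) as [K HK].
  exists K. intros m Hm n. specialize (HK m Hm). simpl in HK. rewrite Rminus_0_r in HK.
  eapply Rle_trans; [|apply qpoch_norm_ge, Hp].
  enough (Cmod (x * p ^ m) / (1 - Cmod p) <= 1 / 2)%R by lra.
  rewrite Cmod_mult, Cmod_pow. replace (Cmod x * Cmod p ^ m / (1 - Cmod p))%R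
    with (Cmod x / (1 - Cmod p) * Cmod p ^ m)%R by (field; lra).
  left. eapply Rle_lt_trans; [apply Rle_abs | exact HK].
Qed.

(** Past an index [K] where the tail factor [(x p^K;p)_(n-K)] has modulus at
    least [1/2], [(x;p)_n] stays above [|(x;p)_K|/2]; before [K], the factor
    completing [(x;p)_n] to [(x;p)_K] has modulus at most [exp(|x|/(1-|p|))]. *)
Lemma qpoch_norm_bounded_below (x : C) : (forall k, x * p ^ k <> 1) ->
  exists d, (0 < d)%R /\ forall n, (d <= Cmod (qpoch x p n))%R.
Proof.
  intros Hx. destruct (eventually_qpoch_shift_ge_half x) as [K HK]. specialize (HK K (le_n K)).
  set (E := exp (Cmod x / (1 - Cmod p))).
  assert (HE : (1 <= E)%R).
  { assert (0 <= Cmod x / (1 - Cmod p))%R by (apply Rdiv_le_0_compat; [apply Cmod_ge_0 | lra]).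
    generalize (exp_ineq1_le (Cmod x / (1 - Cmod p))). unfold E. lra. }
  assert (HPK : (0 < Cmod (qpoch x p K))%R) by apply Cmod_gt_0, qpoch_neq_0, Hx.
  exists (Cmod (qpoch x p K) / (2 * E))%R. split; [apply Rdiv_lt_0_compat; lra|].
  intros n. apply Rmult_le_reg_r with (2 * E)%R; [lra|].
  unfold Rdiv. rewrite Rmult_assoc, Rinv_l, Rmult_1_r by lra.
  assert (Hn := Cmod_ge_0 (qpoch x p n)).
  destruct (le_lt_dec n K) as [HnK | HKn].
  - replace K with (n + (K - n))%nat by lia. rewrite qpoch_add, Cmod_mult.
    assert (Hs := qpoch_shift_norm_le x n (K - n)). fold E in Hs. nra.
  - replace n with (K + (n - K))%nat by lia. rewrite qpoch_add, Cmod_mult.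
    specialize (HK (n - K)%nat).
    assert (1 <= Cmod (qpoch (x * p ^ K) p (n - K)) * (2 * E))%R by nra. nra.
Qed.

Lemma qpoch_cvg (x : C) : qpoch x p --> qpinf x p.
Proof.
  assert (Hex : exists l, qpoch x p --> l).
  { set (d k := qpoch x p (S k) - qpoch x p k).
    assert (Hd : forall k, (Cmod (d k) <= (exp (Cmod x / (1 - Cmod p)) * Cmod x) * Cmod p ^ k)%R).
    { intros k. unfold d. rewrite qpoch_S.
      replace (qpoch x p k * (1 - x * p ^ k) - qpoch x p k) with (- (qpoch x p k * (x * p ^ k))) by ring.
      rewrite Cmod_opp, !Cmod_mult, Cmod_pow, <- Rmult_assoc.
      apply Rmult_le_compat_r; [apply pow_le, Cmod_ge_0|].
      apply Rmult_le_compat_r; [apply Cmod_ge_0 | apply qpoch_norm_le; exact Hp]. }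
    destruct (dominated_psum_cvg (Cmod p) (conj (Cmod_ge_0 p) Hp) _ d Hd) as [l Hl].
    exists (1 + l). apply (filterlim_ext (fun n => 1 + psum d n));
      [|apply lim_plus; [apply filterlim_const | exact Hl]].
    intros n. induction n as [|n IH]; [simpl; ring|].
    rewrite psum_S, Cplus_assoc, IH. unfold d. ring. }
  exact (epsilon_spec (inhabits (0 : C)) _ Hex).
Qed.

Lemma qpinf_split (x : C) (m : nat) : qpinf x p = qpoch x p m * qpinf (x * p ^ m) p.
Proof.
  apply (lim_unique (fun n => qpoch x p (m + n))).
  - apply (lim_reindex _ _ (fun n => m + n)%nat); [|apply qpoch_cvg]. intros N. exists N. lia.
  - apply (filterlim_ext (fun n => qpoch x p m * qpoch (x * p ^ m) p n));
      [intros n; symmetry; apply qpoch_add | apply lim_scal, qpoch_cvg].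
Qed.

Lemma qpinf_neq_0 (x : C) : (forall k, x * p ^ k <> 1) -> qpinf x p <> 0.
Proof.
  intros Hx E. destruct (qpoch_norm_bounded_below x Hx) as [d [Hd Hdn]].
  assert (H0 := qpoch_cvg x). rewrite E in H0. apply lim_iff_norm in H0.
  assert (Hle : Rbar_le d 0%R).
  { apply (is_lim_seq_le (fun _ => d) (fun n => Cmod (qpoch x p n - 0)) d 0%R);
      [|apply is_lim_seq_const | exact H0].
    intros n. replace (qpoch x p n - 0) with (qpoch x p n) by ring. apply Hdn. }
  simpl in Hle. lra.
Qed.

Lemma qpoch_shift_norm_bounded_below (c : C) : (forall k, c * p ^ k <> 1) ->
  exists d, (0 < d)%R /\ forall K n, (d <= Cmod (qpoch (c * p ^ K) p n))%R.
Proof.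
  intros Hc. destruct (qpoch_norm_bounded_below c Hc) as [dc [Hdc Hdcn]].
  set (E := exp (Cmod c / (1 - Cmod p))).
  assert (HE : (0 < E)%R) by apply exp_pos.
  exists (dc / E)%R. split; [apply Rdiv_lt_0_compat; auto|]. intros K n.
  assert (H := Hdcn (K + n)%nat). rewrite qpoch_add, Cmod_mult in H.
  assert (HK := qpoch_norm_le c p Hp K). fold E in HK.
  apply Rmult_le_reg_r with E; [exact HE|]. unfold Rdiv. rewrite Rmult_assoc, Rinv_l, Rmult_1_r by lra.
  generalize (Cmod_ge_0 (qpoch (c * p ^ K) p n)). nra.
Qed.

Lemma pow_S_neq_1 (k : nat) : p * p ^ k <> 1.
Proof. apply Cmod_lt_1_neq_1. rewrite <- Cpow_S. apply Cmod_pow_lt_1, Hp. Qed.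

Lemma one_minus_pow_S_neq_0 (k : nat) : 1 - p * p ^ k <> 0.
Proof. apply Cminus_eq_contra, not_eq_sym, pow_S_neq_1. Qed.

Lemma one_plus_pow_neq_0 (n : nat) : 1 + p ^ n <> 0.
Proof.
  intros E. destruct n as [|n].
  - apply C2_neq_0. rewrite <- E. simpl. ring.
  - apply (Cmod_lt_1_neq_1 (- p ^ S n)); [rewrite Cmod_opp; apply Cmod_pow_lt_1, Hp|].
    replace (- p ^ S n) with (1 - (1 + p ^ S n)) by ring. rewrite E. ring.
Qed.

Lemma qpoch_self_neq_0 (n : nat) : qpoch p p n <> 0.
Proof. apply qpoch_neq_0, pow_S_neq_1. Qed.

End InfiniteProduct.

(** * The q-Gauss sum *)

Section QGauss.
Variables (a b p : C).
Hypotheses (Hp : (Cmod p < 1)%R) (Ha : a <> 0) (Hb : b <> 0).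

Definition gauss_term (c : C) (n : nat) : C :=
  qpoch a p n * qpoch b p n / (qpoch p p n * qpoch c p n) * (c / (a * b)) ^ n.

Lemma gauss_term_0 (c : C) : gauss_term c 0 = 1.
Proof. unfold gauss_term. simpl. field. Qed.

Lemma psum_gauss_contiguous (c : C) (N : nat) : (forall k, c * p ^ k <> 1) ->
  psum (fun n => (1 - c) * (1 - c / (a * b)) * gauss_term c n
                 - (1 - c / a) * (1 - c / b) * gauss_term (c * p) n) N
  = - ((1 - c) * (1 - p ^ N) * gauss_term c N).
Proof.
  intros Hc. induction N as [|N IH]; [unfold gauss_term; simpl; ring|].
  rewrite psum_S, IH. unfold gauss_term.
  assert (Hc1 : forall k, 1 - c * p ^ k <> 0) by (intros k; apply Cminus_eq_contra, not_eq_sym, Hc).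
  assert (Hc0 : 1 - c <> 0) by (replace c with (c * p ^ 0) by (simpl; ring); apply Hc1).
  assert (Ecp : qpoch (c * p) p N = qpoch c p N * (1 - c * p ^ N) / (1 - c)).
  { apply (Cmult_eq_reg_l (1 - c)); [|exact Hc0].
    rewrite <- qpoch_S. replace (S N) with (1 + N)%nat by lia.
    rewrite qpoch_add, Cpow_1_r, qpoch_S. cbn [qpoch Cpow]. field. auto. }
  replace ((c * p / (a * b)) ^ N) with ((c / (a * b)) ^ N * p ^ N)
    by (rewrite <- Cpow_mult_l; f_equal; field; auto).
  assert (Hcp := qpoch_neq_0 c p N Hc). assert (Hpp := qpoch_self_neq_0 p Hp N).
  assert (Hp1 := one_minus_pow_S_neq_0 p Hp N). assert (HcN := Hc1 N).
  rewrite Ecp, !qpoch_S, !Cpow_S. field. repeat split; auto.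
Qed.

Lemma gauss_term_norm_le (c : C) : (forall k, c * p ^ k <> 1) ->
  exists C0, (0 <= C0)%R /\ forall K n,
    (Cmod (gauss_term (c * p ^ K) n) <= C0 * Cmod (c / (a * b)) ^ n * Cmod p ^ (K * n))%R.
Proof.
  intros Hc.
  destruct (qpoch_norm_bounded_below p Hp p (pow_S_neq_1 p Hp)) as [dp [Hdp Hdpn]].
  destruct (qpoch_shift_norm_bounded_below p Hp c Hc) as [dc [Hdc Hdcn]].
  set (Ea := exp (Cmod a / (1 - Cmod p))). set (Eb := exp (Cmod b / (1 - Cmod p))).
  assert (HEab : (0 < Ea * Eb)%R) by (apply Rmult_lt_0_compat; apply exp_pos).
  exists (Ea * Eb / (dp * dc))%R. split; [apply Rdiv_le_0_compat; nra|]. intros K n.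
  unfold gauss_term. rewrite Cmod_mult, Cmod_div, !Cmod_mult, Cmod_pow
    by (apply Cmult_neq_0; [apply qpoch_self_neq_0 | apply qpoch_neq_0, shifted_neq_1]; auto).
  replace (c * p ^ K / (a * b)) with (c / (a * b) * p ^ K) by (field; auto).
  rewrite Cmod_mult, Rpow_mult_distr, Cmod_pow, <- pow_mult, <- Rmult_assoc.
  apply Rmult_le_compat_r; [apply pow_le, Cmod_ge_0|].
  apply Rmult_le_compat_r; [apply pow_le, Cmod_ge_0|].
  apply Rdiv_le_compat.
  - split; [apply Rmult_le_pos; apply Cmod_ge_0|].
    apply Rmult_le_compat; try apply Cmod_ge_0; apply qpoch_norm_le, Hp.
  - split; [nra|]. apply Rmult_le_compat; lra || auto.
Qed.

Section GaussSum.
Variable c : C.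
Hypotheses (Hc : forall k, c * p ^ k <> 1) (Hcab : (Cmod (c / (a * b)) < 1)%R).

Definition gauss_sum (K : nat) : C := series_sum (gauss_term (c * p ^ K)).

Let gauss_term_dominated :
  exists C0, (0 <= C0)%R /\
    forall K n, (Cmod (gauss_term (c * p ^ K) n) <= C0 * Cmod (c / (a * b)) ^ n)%R.
Proof.
  destruct (gauss_term_norm_le c Hc) as [C0 [HC0 Hbound]]. exists C0. split; [exact HC0|].
  intros K n. eapply Rle_trans; [apply Hbound|].
  assert (Cmod p ^ (K * n) <= 1)%R by (apply Rpow_le_1; split; [apply Cmod_ge_0 | lra]).
  assert (0 <= C0 * Cmod (c / (a * b)) ^ n)%R by (apply Rmult_le_pos; [|apply pow_le, Cmod_ge_0]; auto).
  nra.
Qed.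

Lemma gauss_sum_cvg (K : nat) : psum (gauss_term (c * p ^ K)) --> gauss_sum K.
Proof.
  apply series_sum_spec. destruct gauss_term_dominated as [C0 [_ HC0]].
  exact (dominated_psum_cvg _ (conj (Cmod_ge_0 _) Hcab) C0 _ (HC0 K)).
Qed.

Let contiguous_remainder_cvg_0 (K : nat) :
  (fun N => - ((1 - c * p ^ K) * (1 - p ^ N) * gauss_term (c * p ^ K) N)) --> 0.
Proof.
  destruct gauss_term_dominated as [C0 [HC0 Hdom]].
  apply (lim_dominated_0 _ (fun N => Cmod (1 - c * p ^ K) * 2 * C0 * Cmod (c / (a * b)) ^ N)%R).
  - intros N. rewrite Cmod_opp, !Cmod_mult, !Rmult_assoc.
    apply Rmult_le_compat_l; [apply Cmod_ge_0|].
    apply Rmult_le_compat; try apply Cmod_ge_0; [apply Cmod_1_minus_pow_le_2, Hp | apply Hdom].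
  - apply is_lim_seq_geom_scal. split; [apply Cmod_ge_0 | exact Hcab].
Qed.

Lemma gauss_sum_contiguous (K : nat) :
  (1 - c * p ^ K) * (1 - c * p ^ K / (a * b)) * gauss_sum K
  = (1 - c * p ^ K / a) * (1 - c * p ^ K / b) * gauss_sum (S K).
Proof.
  set (c' := c * p ^ K).
  assert (Hc' : forall k, c' * p ^ k <> 1) by apply shifted_neq_1, Hc.
  assert (HS : c * p ^ S K = c' * p) by (unfold c'; rewrite Cpow_S; ring).
  set (contig n := (1 - c') * (1 - c' / (a * b)) * gauss_term c' n
                   - (1 - c' / a) * (1 - c' / b) * gauss_term (c' * p) n).
  apply Ceq_minus, (lim_unique (psum contig)).
  - apply (filterlim_ext (fun N => (1 - c') * (1 - c' / (a * b)) * psum (gauss_term c') N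
                                   - (1 - c' / a) * (1 - c' / b) * psum (gauss_term (c' * p)) N)).
    + intros N. unfold contig. rewrite psum_minus, !psum_scal_l. reflexivity.
    + apply lim_minus; apply lim_scal; [apply gauss_sum_cvg | rewrite <- HS; apply gauss_sum_cvg].
  - apply (filterlim_ext _ _ (fun N => eq_sym (psum_gauss_contiguous c' N Hc'))).
    apply contiguous_remainder_cvg_0.
Qed.

Lemma gauss_sum_iterate (K : nat) :
  qpoch c p K * qpoch (c / (a * b)) p K * gauss_sum 0
  = qpoch (c / a) p K * qpoch (c / b) p K * gauss_sum K.
Proof.
  induction K as [|K IH]; [simpl; ring|].
  rewrite !qpoch_S.
  transitivity (qpoch (c / a) p K * qpoch (c / b) p K
                * ((1 - c * p ^ K) * (1 - c * p ^ K / (a * b)) * gauss_sum K)).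
  - replace (qpoch (c / a) p K * qpoch (c / b) p K * (_ * gauss_sum K))
      with ((1 - c * p ^ K) * (1 - c * p ^ K / (a * b))
            * (qpoch (c / a) p K * qpoch (c / b) p K * gauss_sum K)) by ring.
    rewrite <- IH. field. auto.
  - rewrite gauss_sum_contiguous. field. auto.
Qed.

Lemma gauss_sum_shift_cvg : gauss_sum --> 1.
Proof.
  destruct gauss_term_dominated as [C0 [_ Hdom]].
  destruct (gauss_term_norm_le c Hc) as [C1 [HC1 Hbound]].
  set (delta0 (n : nat) := match n with O => 1 | S _ => 0 end : C).
  destruct (tannery (Cmod (c / (a * b))) (conj (Cmod_ge_0 _) Hcab) C0
              (fun K n => gauss_term (c * p ^ K) n) gauss_sum delta0 Hdom gauss_sum_cvg)
    as [L [HL1 HL2]].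
  - intros [|n].
    + apply (filterlim_ext (fun _ => RtoC 1));
        [intros; symmetry; apply gauss_term_0 | apply filterlim_const].
    + apply (lim_dominated_0 _ (fun K => C1 * Cmod p ^ K)%R);
        [|apply is_lim_seq_geom_scal; split; [apply Cmod_ge_0 | exact Hp]].
      intros K. eapply Rle_trans; [apply Hbound|]. rewrite Rmult_assoc.
      apply Rmult_le_compat_l; [exact HC1|]. rewrite <- (Rmult_1_l (Cmod p ^ K)).
      apply Rmult_le_compat; try (apply pow_le, Cmod_ge_0).
      * apply Rpow_le_1. split; [apply Cmod_ge_0 | lra].
      * apply Rpow_le_antimono; [split; [apply Cmod_ge_0 | lra] | nia].
  - replace (RtoC 1) with L; [exact HL2|].
    apply (lim_unique (psum delta0)); [exact HL1|].
    apply (filterlim_ext_loc (fun _ => RtoC 1)); [|apply filterlim_const].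
    exists 1%nat. intros n Hn. replace n with (S (n - 1)) by lia. rewrite psum_shift.
    simpl. rewrite psum_zero. ring.
Qed.

Theorem q_gauss : exists L, psum (gauss_term c) --> L /\
  qpinf c p * qpinf (c / (a * b)) p * L = qpinf (c / a) p * qpinf (c / b) p.
Proof.
  exists (gauss_sum 0). split.
  - assert (H := gauss_sum_cvg 0). simpl Cpow in H. rewrite Cmult_1_r in H. exact H.
  - apply (lim_unique (fun K => qpoch c p K * qpoch (c / (a * b)) p K * gauss_sum 0)).
    + apply lim_mult; [apply lim_mult; apply qpoch_cvg, Hp | apply filterlim_const].
    + apply (filterlim_ext _ _ (fun K => eq_sym (gauss_sum_iterate K))).
      rewrite <- (Cmult_1_r (qpinf (c / a) p * qpinf (c / b) p)).
      apply lim_mult; [apply lim_mult; apply qpoch_cvg, Hp | apply gauss_sum_shift_cvg].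
Qed.

End GaussSum.
End QGauss.

(** * Rogers-Szego polynomials *)

Section RogersSzego.
Variable p : C.
Hypothesis Hp : (Cmod p < 1)%R.

(** [rogers_szego N x] is the Rogers-Szego polynomial [sum_i [N choose i]_p x^i]
    divided by [(p;p)_N]. *)
Definition rogers_szego (N : nat) (x : C) : C :=
  psum (fun i => x ^ i / (qpoch p p i * qpoch p p (N - i))) (S N).

Let Hpp := qpoch_self_neq_0 p Hp.
Let Hp1 := one_minus_pow_S_neq_0 p Hp.

Lemma rogers_szego_drop_first (N : nat) (y : C) :
  psum (fun i => y ^ i * (1 - p ^ i) / (qpoch p p i * qpoch p p (S N - i))) (S (S N))
  = y * rogers_szego N y.
Proof.
  unfold rogers_szego. rewrite psum_shift, <- psum_scal_l.
  rewrite (psum_ext _ (fun i => y * (y ^ i / (qpoch p p i * qpoch p p (N - i))))).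
  - cbn [Cpow]. unfold Cdiv. ring.
  - intros i Hi. rewrite qpoch_S. simpl Nat.sub. rewrite !Cpow_S.
    assert (Hi1 := Hp1 i). field. repeat split; auto.
Qed.

Lemma rogers_szego_drop_last (N : nat) (y : C) :
  psum (fun i => y ^ i * (1 - p ^ (S N - i)) / (qpoch p p i * qpoch p p (S N - i))) (S (S N))
  = rogers_szego N y.
Proof.
  unfold rogers_szego. rewrite psum_S, Nat.sub_diag.
  rewrite (psum_ext _ (fun i => y ^ i / (qpoch p p i * qpoch p p (N - i)))).
  - cbn [Cpow]. unfold Cdiv. ring.
  - intros i Hi. replace (S N - i)%nat with (S (N - i)) by lia.
    rewrite qpoch_S, Cpow_S. assert (Hi1 := Hp1 (N - i)). field. repeat split; auto.
Qed.

Lemma rogers_szego_S (N : nat) (x : C) :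
  (1 - p ^ S N) * rogers_szego (S N) x = x * rogers_szego N x + rogers_szego N (p * x).
Proof.
  unfold rogers_szego at 1. rewrite <- psum_scal_l.
  rewrite (psum_ext _ (fun i =>
      x ^ i * (1 - p ^ i) / (qpoch p p i * qpoch p p (S N - i))
      + (p * x) ^ i * (1 - p ^ (S N - i)) / (qpoch p p i * qpoch p p (S N - i)))).
  - rewrite psum_plus, rogers_szego_drop_first, rogers_szego_drop_last. reflexivity.
  - intros i Hi. rewrite Cpow_mult_l, (Cpow_split p (S N) i) by lia. field. auto.
Qed.

Lemma rogers_szego_S_scaled (N : nat) (x : C) :
  (1 - p ^ S N) * rogers_szego (S N) (p * x) = rogers_szego N (p * x) + x * p ^ S N * rogers_szego N x.
Proof.
  unfold rogers_szego at 1. rewrite <- psum_scal_l.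
  rewrite (psum_ext _ (fun i =>
      (p * x) ^ i * (1 - p ^ (S N - i)) / (qpoch p p i * qpoch p p (S N - i))
      + p ^ S N * (x ^ i * (1 - p ^ i) / (qpoch p p i * qpoch p p (S N - i))))).
  - rewrite psum_plus, psum_scal_l, rogers_szego_drop_first, rogers_szego_drop_last. ring.
  - intros i Hi. rewrite Cpow_mult_l, (Cpow_split p (S N) i) by lia. field. auto.
Qed.

Lemma rogers_szego_rec (N : nat) (x : C) :
  (1 - p ^ S (S N)) * rogers_szego (S (S N)) x
  = (1 + x) * rogers_szego (S N) x - x * rogers_szego N x.
Proof.
  apply (Cmult_eq_reg_l (1 - p ^ S N)); [|apply Hp1].
  transitivity (x * ((1 - p ^ S N) * rogers_szego (S N) x) + (1 - p ^ S N) * rogers_szego (S N) (p * x)).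
  { rewrite rogers_szego_S. ring. }
  rewrite rogers_szego_S_scaled, rogers_szego_S.
  replace (rogers_szego N (p * x))
    with ((1 - p ^ S N) * rogers_szego (S N) x - x * rogers_szego N x) by (rewrite rogers_szego_S; ring).
  ring.
Qed.

End RogersSzego.

Section RogersSzegoAtMinusQ.
Variable q : C.
Hypothesis Hq : (Cmod q < 1)%R.

Lemma Cmod_sq_lt_1 : (Cmod (q ^ 2) < 1)%R.
Proof. apply (Cmod_pow_lt_1 q 1 Hq). Qed.

Let p := q ^ 2.
Let Hp : (Cmod p < 1)%R := Cmod_sq_lt_1.

Lemma sq_pow_neg (N : nat) : p ^ N = (- q) ^ N * (- q) ^ N.
Proof. unfold p. rewrite <- Cpow_mult_l. f_equal. simpl. ring. Qed.

Lemma qpoch_neg_base_rec (N : nat) :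
  qpoch q (- q) (S (S N)) = (1 - q) * qpoch q (- q) (S N) + q * (1 - p ^ S N) * qpoch q (- q) N.
Proof. rewrite !qpoch_S, (Cpow_S (- q) N), (Cpow_S p N), sq_pow_neg. unfold p. simpl. ring. Qed.

Lemma rogers_szego_neg_q (N : nat) : rogers_szego p N (- q) = qpoch q (- q) N / qpoch p p N.
Proof.
  assert (Hpp := qpoch_self_neq_0 p Hp). assert (Hp1 := one_minus_pow_S_neq_0 p Hp).
  enough (H : rogers_szego p N (- q) = qpoch q (- q) N / qpoch p p N
              /\ rogers_szego p (S N) (- q) = qpoch q (- q) (S N) / qpoch p p (S N)) by apply H.
  induction N as [|N [IH0 IH1]].
  - assert (H0 : 1 - p <> 0) by (generalize (Hp1 O); cbn [Cpow]; rewrite Cmult_1_r; auto).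
    unfold rogers_szego. cbn [psum Nat.sub]. rewrite !qpoch_S. cbn [qpoch Cpow].
    split; field; auto.
  - split; [exact IH1|].
    apply (Cmult_eq_reg_l (1 - p ^ S (S N))); [|apply (Hp1 (S N))].
    rewrite rogers_szego_rec, IH0, IH1, qpoch_neg_base_rec by exact Hp.
    rewrite !(qpoch_S p p (S N)), !(qpoch_S p p N), !Cpow_S.
    assert (H0 := Hp1 N). assert (H1 := Hp1 (S N)). rewrite Cpow_S in H1.
    field. auto.
Qed.

Lemma qpoch_neg_base_even (n : nat) :
  qpoch q (- q) (2 * n) * qpoch (- q) p n * qpoch p p n = qpoch p p (2 * n).
Proof.
  induction n as [|n IH]; [simpl; ring|].
  replace (2 * S n)%nat with (S (S (2 * n))) by lia.
  rewrite !qpoch_S, <- IH, (Cpow_S (- q) (2 * n)), (Cpow_S p (2 * n)).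
  replace (2 * n)%nat with (n + n)%nat by lia. rewrite !Cpow_add_r, !sq_pow_neg.
  unfold p. simpl. ring.
Qed.

Lemma qpoch_neg_q_neq_0 (n : nat) : qpoch (- q) p n <> 0.
Proof.
  apply qpoch_neq_0. intros k. apply Cmod_lt_1_neq_1. rewrite Cmod_mult, Cmod_opp, Cmod_pow.
  assert (0 <= Cmod p)%R by apply Cmod_ge_0. assert (0 <= Cmod q)%R by apply Cmod_ge_0.
  assert (Cmod p ^ k <= 1)%R by (apply Rpow_le_1; lra). nra.
Qed.

Lemma rogers_szego_even_neg_q (n : nat) :
  rogers_szego p (2 * n) (- q) = 1 / (qpoch (- q) p n * qpoch p p n).
Proof.
  rewrite rogers_szego_neg_q, <- qpoch_neg_base_even.
  assert (Hm := qpoch_neg_q_neq_0 n). assert (Hpp := qpoch_self_neq_0 p Hp n).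
  assert (H2n : qpoch q (- q) (2 * n) <> 0).
  { intros E. apply (qpoch_self_neq_0 p Hp (2 * n)). rewrite <- qpoch_neg_base_even, E. ring. }
  field. auto.
Qed.

End RogersSzegoAtMinusQ.

(** * Row sums of the array *)

Lemma zpowC_sub (x : C) (A B : nat) : x <> 0 -> zpowC x (Z.of_nat A - Z.of_nat B) = x ^ A / x ^ B.
Proof.
  intros Hx. unfold zpowC. destruct (Z.leb_spec 0 (Z.of_nat A - Z.of_nat B)).
  - replace (Z.of_nat A - Z.of_nat B)%Z with (Z.of_nat (A - B)) by lia.
    rewrite Nat2Z.id, pow_n_Cpow, (Cpow_split x A B) by lia. field. apply Cpow_nz, Hx.
  - replace (- (Z.of_nat A - Z.of_nat B))%Z with (Z.of_nat (B - A)) by lia.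
    rewrite Nat2Z.id, pow_n_Cpow, (Cpow_split x B A) by lia. field. split; apply Cpow_nz, Hx.
Qed.

Lemma m1_neq_0 : (-1 : C) <> 0.
Proof. intros E. apply (f_equal fst) in E. simpl in E. lra. Qed.

Lemma m1_pow_sq (m : nat) : (-1) ^ m * (-1) ^ m = 1.
Proof. rewrite <- Cpow_mult_l. replace (-1 * -1) with (RtoC 1) by ring. apply Cpow_1_l. Qed.

Lemma m1_pow_double_add (m e : nat) : (-1) ^ (2 * m + e) = (-1) ^ e.
Proof.
  replace (2 * m + e)%nat with (m + m + e)%nat by lia. rewrite !Cpow_add_r, m1_pow_sq. ring.
Qed.

Lemma zpowC_m1_sub (A B : nat) : zpowC (-1) (Z.of_nat A - Z.of_nat B) = (-1) ^ (A + B).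
Proof.
  assert (Hm := m1_neq_0).
  rewrite zpowC_sub, Cpow_add_r by exact Hm.
  transitivity ((-1) ^ A * ((-1) ^ B * (-1) ^ B) / (-1) ^ B);
    [rewrite m1_pow_sq | ]; field; apply Cpow_nz, Hm.
Qed.

Definition fold_coef (e : nat) : C := match e with O => 1 | S _ => 2 end.

Lemma inner_sum_fold (q : C) (r : nat) : q <> 0 ->
  inner_sum q r = psum (fun e => fold_coef e * (-1) ^ e * q ^ ((r - e) * (r + e))) (S r) / q ^ r.
Proof.
  intros Hq. assert (Hqr := Cpow_nz q r Hq).
  unfold inner_sum. rewrite sum_n_psum.
  rewrite (psum_ext _ (fun k => (-1) ^ (k + r) * (q ^ (k * (2 * r - k)) / q ^ r))).
  - rewrite psum_fold_middle, psum_shift. unfold Cdiv. rewrite Cmult_plus_distr_r, <- psum_scal_r.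
    f_equal.
    + replace (r + r)%nat with (2 * r + 0)%nat by lia. rewrite m1_pow_double_add.
      replace (r * (2 * r - r))%nat with ((r - 0) * (r + 0))%nat by nia. simpl. ring.
    + apply psum_ext. intros d Hd.
      replace (S r + d + r)%nat with (2 * r + S d)%nat by lia.
      replace (r - S d + r)%nat with (2 * (r - S d) + S d)%nat by lia.
      rewrite !m1_pow_double_add.
      replace ((S r + d) * (2 * r - (S r + d)))%nat with ((r - S d) * (r + S d))%nat by nia.
      replace ((r - S d) * (2 * r - (r - S d)))%nat with ((r - S d) * (r + S d))%nat by nia.
      simpl fold_coef. ring.
  - intros k Hk. cbv zeta. rewrite zpowC_m1_sub.
    replace (Z.of_nat r * Z.of_nat r - Z.of_nat r
             - (Z.of_nat k - Z.of_nat r) * (Z.of_nat k - Z.of_nat r))%Z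
      with (Z.of_nat (k * (2 * r - k)) - Z.of_nat r)%Z
      by (rewrite Nat2Z.inj_mul, Nat2Z.inj_sub by lia; lia).
    rewrite zpowC_sub by exact Hq. reflexivity.
Qed.

Lemma inner_sum_norm_le (q : C) (r : nat) : q <> 0 -> (Cmod q < 1)%R ->
  (Cmod (inner_sum q r) <= 2 / (1 - Cmod q) / Cmod q ^ r)%R.
Proof.
  intros Hq0 Hq. rewrite inner_sum_fold by exact Hq0.
  rewrite Cmod_div, Cmod_pow by apply Cpow_nz, Hq0.
  assert (Hqr : (0 < Cmod q ^ r)%R) by apply pow_lt, Cmod_gt_0, Hq0.
  unfold Rdiv at 2. apply Rmult_le_compat_r; [left; apply Rinv_0_lt_compat, Hqr|].
  rewrite psum_rev. apply psum_norm_le_geom; [split; [apply Cmod_ge_0 | exact Hq] | lra |].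
  intros k Hk. replace (S r - S k)%nat with (r - k)%nat by lia.
  rewrite !Cmod_mult, !Cmod_pow.
  assert (Hc : (Cmod (fold_coef (r - k)) <= 2)%R).
  { destruct (r - k)%nat; simpl; [rewrite Cmod_1 | rewrite Cmod_R, Rabs_pos_eq]; lra. }
  assert (Hm : Cmod (-1) = 1%R) by (rewrite Cmod_R, Rabs_left; lra).
  assert (Hpow : (Cmod q ^ ((r - (r - k)) * (r + (r - k))) <= Cmod q ^ k)%R).
  { apply Rpow_le_antimono; [split; [apply Cmod_ge_0 | lra] | nia]. }
  rewrite Hm, pow1, Rmult_1_r.
  apply Rmult_le_compat; try apply Cmod_ge_0; try apply pow_le, Cmod_ge_0; assumption.
Qed.

Section RowIdentity.
Variable q : C.
Hypotheses (Hq0 : q <> 0) (Hq : (Cmod q < 1)%R).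
Let p := q ^ 2.
Let Hp : (Cmod p < 1)%R := Cmod_sq_lt_1 q Hq.
Let Hpp := qpoch_self_neq_0 p Hp.
Let Hp1 := one_minus_pow_S_neq_0 p Hp.
Let Hp2 := one_plus_pow_neq_0 p Hp.

Definition row_term (n e r : nat) : C :=
  (1 - p ^ (2 * r + 1)) * q ^ ((r - e) * (r + e)) / (q ^ r * qpoch p p (n - r) * qpoch p p (n + r + 1)).

Definition row_antidiff (n e r : nat) : C :=
  (1 + p ^ r) * q ^ ((r - e) * (r + e)) / ((1 + p ^ n) * q ^ r * qpoch p p (n - r) * qpoch p p (n + r)).

Lemma row_antidiff_step (n e r : nat) : (e <= r)%nat -> (r < n)%nat ->
  row_antidiff n e r - row_antidiff n e (S r) = row_term n e r.
Proof.
  intros Her Hrn. unfold row_antidiff, row_term.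
  replace ((S r - e) * (S r + e))%nat with ((r - e) * (r + e) + (2 * r + 1))%nat by nia.
  destruct (Nat.le_exists_sub (S r) n Hrn) as [u [-> _]].
  replace (u + S r - r)%nat with (S u) by lia. replace (u + S r - S r)%nat with u by lia.
  replace (u + S r + S r)%nat with (S (u + S r + r)) by lia.
  replace (u + S r + r + 1)%nat with (S (u + S r + r)) by lia.
  assert (E1 : q ^ ((r - e) * (r + e) + (2 * r + 1)) = q ^ ((r - e) * (r + e)) * q * p ^ r).
  { rewrite !Cpow_add_r. unfold p. rewrite <- Cpow_mult_r. simpl (q ^ 1). ring. }
  assert (E2 : p ^ (2 * r + 1) = p * (p ^ r * p ^ r)).
  { replace (2 * r + 1)%nat with (S (r + r)) by lia. rewrite Cpow_S, Cpow_add_r. ring. }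
  assert (E3 : p ^ (u + S r) = p ^ u * (p * p ^ r)) by (rewrite Cpow_add_r, Cpow_S; ring).
  assert (E4 : p ^ (u + S r + r) = p ^ u * (p * p ^ r) * p ^ r) by (rewrite !Cpow_add_r, Cpow_S; ring).
  assert (Hu := Hp1 u). assert (Hur := Hp1 (u + S r + r)%nat). assert (Hus := Hp2 (u + S r)%nat).
  assert (Hqr := Cpow_nz q r Hq0). assert (Hqe := Cpow_nz q ((r - e) * (r + e)) Hq0).
  rewrite !qpoch_S, E1, E2, E3, E4, (Cpow_S q r), (Cpow_S p r). rewrite E3 in Hus. rewrite E4 in Hur.
  field. repeat split; auto.
Qed.

Lemma row_term_last (n e : nat) : row_term n e n = row_antidiff n e n.
Proof.
  unfold row_term, row_antidiff. rewrite Nat.sub_diag.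
  replace (n + n + 1)%nat with (S (n + n)) by lia. replace (2 * n + 1)%nat with (S (n + n)) by lia.
  rewrite qpoch_S, Cpow_S.
  assert (Hqn := Cpow_nz q n Hq0). assert (H1 := Hp1 (n + n)%nat). assert (H2 := Hp2 n).
  simpl qpoch. field. repeat split; auto.
Qed.

Lemma psum_row_term (n e : nat) : (e <= n)%nat ->
  psum (fun m => row_term n e (m + e)) (S n - e) = row_antidiff n e e.
Proof.
  intros Hen.
  assert (Hpartial : forall k, (e + k <= n)%nat ->
            psum (fun m => row_term n e (m + e)) k = row_antidiff n e e - row_antidiff n e (e + k)).
  { induction k as [|k IH]; intros Hk; [rewrite Nat.add_0_r; simpl; ring|].
    rewrite psum_S, IH, <- row_antidiff_step by lia.
    rewrite Nat.add_succ_r, (Nat.add_comm k e). ring. }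
  replace (S n - e)%nat with (S (n - e)) by lia.
  rewrite psum_S, Hpartial by lia.
  replace (e + (n - e))%nat with n by lia. replace (n - e + e)%nat with n by lia.
  rewrite row_term_last. ring.
Qed.

Definition row_sum (n : nat) : C :=
  psum (fun r => (1 - p ^ (2 * r + 1)) * inner_sum q r
                 / (qpoch p p (n - r) * qpoch p p (n + r + 1))) (S n).

Lemma row_sum_antidiff (n : nat) :
  row_sum n = psum (fun e => fold_coef e * (-1) ^ e * row_antidiff n e e) (S n).
Proof.
  unfold row_sum.
  rewrite (psum_ext _ (fun r => psum (fun e => fold_coef e * (-1) ^ e * row_term n e r) (S r))).
  - rewrite (psum_swap_triangle (fun r e => fold_coef e * (-1) ^ e * row_term n e r)).
    apply psum_ext. intros e He.
    rewrite (psum_scal_l (fold_coef e * (-1) ^ e) (fun m => row_term n e (m + e))), psum_row_term by lia.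
    reflexivity.
  - intros r Hr. rewrite inner_sum_fold by exact Hq0.
    assert (Hqr := Cpow_nz q r Hq0). assert (H1 := Hpp (n - r)%nat). assert (H2 := Hpp (n + r + 1)%nat).
    transitivity (psum (fun e => fold_coef e * (-1) ^ e * q ^ ((r - e) * (r + e))) (S r)
                  * ((1 - p ^ (2 * r + 1)) / (q ^ r * qpoch p p (n - r) * qpoch p p (n + r + 1))));
      [field; repeat split; auto|].
    rewrite <- psum_scal_r. apply psum_ext. intros e He. unfold row_term. field. repeat split; auto.
Qed.

Lemma rogers_szego_fold (n : nat) :
  rogers_szego p (2 * n) (- q)
  = (- q) ^ n * (1 + p ^ n) / 2 * psum (fun e => fold_coef e * (-1) ^ e * row_antidiff n e e) (S n).
Proof.
  unfold rogers_szego. rewrite psum_fold_middle, psum_shift, Cmult_plus_distr_l, <- psum_scal_l.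
  assert (Hn := Hpp n). assert (H2n := Hp2 n). assert (H2 := C2_neq_0).
  f_equal.
  - unfold row_antidiff. replace (2 * n - n)%nat with n by lia.
    cbn [fold_coef Cpow Nat.sub Nat.add Nat.mul]. rewrite Nat.sub_0_r, Nat.add_0_r. field. auto.
  - apply psum_ext. intros d Hd.
    replace (S n + d)%nat with (n + S d)%nat by lia.
    replace (2 * n - (n + S d))%nat with (n - S d)%nat by lia.
    replace (2 * n - (n - S d))%nat with (n + S d)%nat by lia.
    unfold row_antidiff. rewrite Nat.sub_diag, Nat.mul_0_l. simpl fold_coef. simpl (q ^ 0).
    set (M := (-1 : C) ^ S d).
    assert (HM : M * M = 1) by apply m1_pow_sq.
    assert (HM0 : M <> 0) by apply Cpow_nz, m1_neq_0.
    assert (Hqd := Cpow_nz q (S d) Hq0).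
    assert (E1 : (- q) ^ (n + S d) = (- q) ^ n * M * q ^ S d).
    { rewrite Cpow_add_r. unfold M. rewrite <- Cmult_assoc, <- Cpow_mult_l. do 2 f_equal. ring. }
    assert (E2 : (- q) ^ (n - S d) = (- q) ^ n * M / q ^ S d).
    { assert (E3 : (- q) ^ n = (- q) ^ (n - S d) * (M * q ^ S d)).
      { rewrite (Cpow_split (- q) n (n - S d)) by lia. replace (n - (n - S d))%nat with (S d) by lia.
        f_equal. unfold M. rewrite <- Cpow_mult_l. f_equal. ring. }
      rewrite E3. transitivity ((- q) ^ (n - S d) * (M * M)); [rewrite HM; ring | field; auto]. }
    assert (E4 : p ^ S d = q ^ S d * q ^ S d).
    { unfold p. rewrite <- Cpow_mult_r, <- Cpow_add_r. f_equal. lia. }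
    rewrite E1, E2, E4.
    assert (N1 := Hpp (n - S d)%nat). assert (N2 := Hpp (n + S d)%nat).
    field. repeat split; auto.
Qed.

Theorem row_sum_closed (n : nat) :
  row_sum n = 2 / ((- q) ^ n * (1 + p ^ n) * qpoch (- q) p n * qpoch p p n).
Proof.
  rewrite row_sum_antidiff.
  set (P := psum (fun e => fold_coef e * (-1) ^ e * row_antidiff n e e) (S n)).
  assert (H2n := Hp2 n). assert (Hn := Hpp n). assert (Hm := qpoch_neg_q_neq_0 q Hq n).
  assert (Hqn : (- q) ^ n <> 0) by apply Cpow_nz, Copp_neq_0, Hq0.
  assert (H2 := C2_neq_0).
  replace P with (2 / ((- q) ^ n * (1 + p ^ n)) * ((- q) ^ n * (1 + p ^ n) / 2 * P))
    by (field; repeat split; auto).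
  assert (E := rogers_szego_even_neg_q q Hq n). fold p in E.
  rewrite <- rogers_szego_fold, E. field. repeat split; auto.
Qed.

End RowIdentity.

(** * Column sums and the exchange of summations *)

Lemma lim_psum_eventually_0 (f : nat -> C) (N : nat) :
  (forall r, (N <= r)%nat -> f r = 0) -> psum f --> psum f N.
Proof.
  intros Hf. apply (filterlim_ext_loc (fun _ => psum f N)); [|apply filterlim_const].
  exists N. intros n Hn. replace n with (N + (n - N))%nat by lia.
  rewrite psum_add_range, (psum_ext (fun k => f (N + k)%nat) (fun _ => 0)) by (intros; apply Hf; lia).
  rewrite psum_zero. ring.
Qed.

Section TriangularArray.
Variables q a c : C.
Hypotheses (Hq0 : q <> 0) (Hq : (Cmod q < 1)%R) (Ha : a <> 0) (Hc : c <> 0)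
  (Hqa : forall k : nat, q ^ 2 * a * (q ^ 2) ^ k <> 1)
  (Hqc : forall k : nat, q ^ 2 * c * (q ^ 2) ^ k <> 1)
  (Hz : (Cmod (a * c) < Cmod q)%R).

Let p := q ^ 2.
Let z := a * c.
Let Hp : (Cmod p < 1)%R := Cmod_sq_lt_1 q Hq.
Let Hpp := qpoch_self_neq_0 p Hp.

Definition lhs_term (n : nat) : C :=
  (1 - q ^ (4 * n + 2))
  * (qpoch (q ^ 2 / a) (q ^ 2) n * qpoch (q ^ 2 / c) (q ^ 2) n
     / (qpoch (q ^ 2 * a) (q ^ 2) n * qpoch (q ^ 2 * c) (q ^ 2) n))
  * (a * c) ^ n
  * inner_sum q n.

Definition rhs_term (n : nat) : C :=
  qpoch (q ^ 2 / a) (q ^ 2) n * qpoch (q ^ 2 / c) (q ^ 2) n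
  / ((1 + q ^ (2 * n)) * (qpoch (- q) (q ^ 2) n * qpoch (q ^ 2) (q ^ 2) n))
  * (- (a * c / q)) ^ n.

Definition double_term (n r : nat) : C :=
  qpoch (p / a) p n * qpoch (p / c) p n * z ^ n
  * ((1 - p ^ (2 * r + 1)) * inner_sum q r / (qpoch p p (n - r) * qpoch p p (n + r + 1))).

Lemma z_lt_1 : (Cmod z < 1)%R.
Proof. unfold z. lra. Qed.

Lemma double_term_row_sum (n : nat) : psum (double_term n) (S n) = 2 * rhs_term n.
Proof.
  unfold double_term. rewrite psum_scal_l.
  change (psum _ (S n)) with (row_sum q n). rewrite (row_sum_closed q Hq0 Hq n).
  unfold rhs_term.
  assert (Hmq : - q <> 0) by apply Copp_neq_0, Hq0.
  replace (q ^ (2 * n)) with (p ^ n) by (unfold p; symmetry; apply Cpow_mult_r).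
  replace ((- (a * c / q)) ^ n) with (z ^ n / (- q) ^ n)
    by (unfold Cdiv; rewrite <- Cpow_inv, <- Cpow_mult_l by exact Hmq;
        f_equal; unfold z; field; exact Hq0).
  assert (H1 := one_plus_pow_neq_0 p Hp n). assert (H2 := qpoch_neg_q_neq_0 q Hq n).
  assert (H3 := Cpow_nz _ n Hmq). assert (H4 := Hpp n).
  unfold p in H1, H4 |- *. field. repeat split; auto.
Qed.

Lemma double_term_norm_le :
  exists D, forall n r, (Cmod (double_term n r) <= D * Cmod z ^ n / Cmod q ^ r)%R.
Proof.
  destruct (qpoch_norm_bounded_below p Hp p (pow_S_neq_1 p Hp)) as [d [Hd Hdn]].
  set (Ea := exp (Cmod (p / a) / (1 - Cmod p))). set (Ec := exp (Cmod (p / c) / (1 - Cmod p))).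
  assert (HE : (0 < Ea * Ec)%R) by (apply Rmult_lt_0_compat; apply exp_pos).
  assert (Hq' : (0 < Cmod q)%R) by apply Cmod_gt_0, Hq0.
  exists (Ea * Ec * (2 * (2 / (1 - Cmod q))) / (d * d))%R. intros n r.
  assert (Hqr : (0 < Cmod q ^ r)%R) by apply pow_lt, Hq'.
  assert (Hzn : (0 <= Cmod z ^ n)%R) by apply pow_le, Cmod_ge_0.
  unfold double_term.
  set (A := qpoch (p / a) p n * qpoch (p / c) p n).
  set (P := qpoch p p (n - r) * qpoch p p (n + r + 1)).
  assert (HP : (d * d <= Cmod P)%R) by (unfold P; rewrite Cmod_mult; apply Rmult_le_compat; lra || auto).
  rewrite Cmod_mult, Cmod_mult, Cmod_pow, Cmod_div, Cmod_mult
    by (unfold P; apply Cmult_neq_0; apply Hpp).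
  apply Rle_trans with (Ea * Ec * Cmod z ^ n * (2 * (2 / (1 - Cmod q) / Cmod q ^ r) / (d * d)))%R.
  - apply Rmult_le_compat.
    + apply Rmult_le_pos; [apply Cmod_ge_0 | exact Hzn].
    + apply Rdiv_le_0_compat; [apply Rmult_le_pos; apply Cmod_ge_0 | nra].
    + apply Rmult_le_compat_r; [exact Hzn|]. unfold A. rewrite Cmod_mult.
      apply Rmult_le_compat; try apply Cmod_ge_0; apply qpoch_norm_le, Hp.
    + apply Rdiv_le_compat; [split; [apply Rmult_le_pos; apply Cmod_ge_0|] | split; [nra | exact HP]].
      apply Rmult_le_compat; try apply Cmod_ge_0;
        [apply Cmod_1_minus_pow_le_2, Hp | apply inner_sum_norm_le; auto].
  - right. field. split; [lra | nra].
Qed.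

Let pow_2r1 (r : nat) : p ^ (2 * r + 1) = p * p ^ r * p ^ r.
Proof. rewrite Nat.add_1_r, Cpow_S, <- Cmult_assoc, <- Cpow_add_r. do 2 f_equal. lia. Qed.

Definition column_factor (r : nat) : C :=
  qpoch (p / a) p r * qpoch (p / c) p r * z ^ r * (1 - p ^ (2 * r + 1)) * inner_sum q r
  / qpoch p p (2 * r + 1).

Lemma double_term_column_gauss (r m : nat) :
  double_term (m + r) r
  = column_factor r * gauss_term (p / a * p ^ r) (p / c * p ^ r) p (p * p ^ (2 * r + 1)) m.
Proof.
  assert (Hp0 : p <> 0) by apply Cpow_nz, Hq0.
  assert (Hpr := Cpow_nz p r Hp0).
  assert (Hc' : forall k, p * p ^ (2 * r + 1) * p ^ k <> 1) by apply shifted_neq_1, pow_S_neq_1, Hp.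
  assert (Ez : p * p ^ (2 * r + 1) / (p / a * p ^ r * (p / c * p ^ r)) = z)
    by (rewrite pow_2r1; unfold z; field; auto).
  unfold double_term, gauss_term, column_factor. rewrite Ez.
  replace (m + r - r)%nat with m by lia.
  replace (m + r + r + 1)%nat with ((2 * r + 1) + m)%nat by lia.
  rewrite (Nat.add_comm m r), (qpoch_add (p / a) p r m), (qpoch_add (p / c) p r m),
    (qpoch_add p p (2 * r + 1) m), (Cpow_add_r z r m), pow_2r1.
  assert (H1 := Hpp m). assert (H2 := qpoch_neq_0 _ p m Hc'). rewrite pow_2r1 in H2.
  field. auto.
Qed.

Lemma double_term_column (r : nat) : exists L, psum (fun m => double_term (m + r) r) --> L /\
  L * (qpinf p p * qpinf z p) = qpinf (p * a) p * qpinf (p * c) p * lhs_term r.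
Proof.
  assert (Hp0 : p <> 0) by apply Cpow_nz, Hq0.
  assert (Hpr := Cpow_nz p r Hp0).
  set (a' := p / a * p ^ r). set (b' := p / c * p ^ r). set (c' := p * p ^ (2 * r + 1)).
  assert (Hc' : forall k, c' * p ^ k <> 1) by apply shifted_neq_1, pow_S_neq_1, Hp.
  assert (Ez : c' / (a' * b') = z) by (unfold c', a', b', z; rewrite pow_2r1; field; auto).
  assert (Hcab : (Cmod (c' / (a' * b')) < 1)%R) by (rewrite Ez; apply z_lt_1).
  destruct (q_gauss a' b' p Hp (Cmult_neq_0 _ _ (Cdiv_neq_0 _ _ Hp0 Ha) Hpr)
              (Cmult_neq_0 _ _ (Cdiv_neq_0 _ _ Hp0 Hc) Hpr) c' Hc' Hcab) as [L [HL HG]].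
  exists (column_factor r * L). split.
  - apply (filterlim_ext (fun N => column_factor r * psum (gauss_term a' b' p c') N));
      [|apply lim_scal, HL].
    intros N. rewrite <- psum_scal_l. apply psum_ext. intros m _.
    symmetry. apply double_term_column_gauss.
  - rewrite Ez in HG.
    replace (c' / a') with (p * a * p ^ r) in HG by (unfold c', a'; rewrite pow_2r1; field; auto).
    replace (c' / b') with (p * c * p ^ r) in HG by (unfold c', b'; rewrite pow_2r1; field; auto).
    rewrite (qpinf_split p Hp p (2 * r + 1)), (qpinf_split p Hp (p * a) r), (qpinf_split p Hp (p * c) r).
    fold c'.
    transitivity (column_factor r * qpoch p p (2 * r + 1) * (qpinf c' p * qpinf z p * L)); [ring|].
    rewrite HG. unfold column_factor, lhs_term. fold p. fold z.
    replace (q ^ (4 * r + 2)) with (p ^ (2 * r + 1)) by (unfold p; rewrite <- Cpow_mult_r; f_equal; lia).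
    assert (H1 := Hpp (2 * r + 1)%nat).
    assert (H3 := qpoch_neq_0 (p * a) p r Hqa). assert (H4 := qpoch_neq_0 (p * c) p r Hqc).
    field. auto.
Qed.

Definition column_sum (r : nat) : C := series_sum (fun m => double_term (m + r) r).

Lemma column_sum_cvg (r : nat) : psum (fun m => double_term (m + r) r) --> column_sum r.
Proof. apply series_sum_spec. destruct (double_term_column r) as [L [HL _]]. exists L. exact HL. Qed.

Lemma column_sum_eq (r : nat) :
  column_sum r * (qpinf p p * qpinf z p) = qpinf (p * a) p * qpinf (p * c) p * lhs_term r.
Proof.
  destruct (double_term_column r) as [L [HL HE]]. rewrite <- HE. f_equal.
  exact (lim_unique _ _ _ (column_sum_cvg r) HL).
Qed.

Lemma double_term_truncated_column_norm_le :
  exists D, forall N r,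
    (Cmod (psum (fun m => double_term (m + r) r) (N - r)) <= D * (Cmod z / Cmod q) ^ r)%R.
Proof.
  destruct double_term_norm_le as [D HD].
  assert (Hq' : (0 < Cmod q)%R) by apply Cmod_gt_0, Hq0.
  assert (HD0 : (0 <= D)%R).
  { specialize (HD O O). simpl in HD. generalize (Cmod_ge_0 (double_term 0 0)). lra. }
  assert (Hz1 := z_lt_1).
  exists (D / (1 - Cmod z))%R. intros N r.
  replace (D / (1 - Cmod z) * (Cmod z / Cmod q) ^ r)%R with (D * (Cmod z / Cmod q) ^ r / (1 - Cmod z))%R
    by (field; lra).
  apply psum_norm_le_geom; [split; [apply Cmod_ge_0 | exact Hz1] | |].
  - apply Rmult_le_pos; [exact HD0 | apply pow_le, Rdiv_le_0_compat; [apply Cmod_ge_0 | exact Hq']].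
  - intros m _. eapply Rle_trans; [apply HD|].
    right. rewrite pow_add. unfold Rdiv. rewrite Rpow_mult_distr, pow_inv. field. apply pow_nonzero. lra.
Qed.

Theorem lhs_rhs_series_cvg : exists L, psum rhs_term --> L / 2 /\
  psum lhs_term --> qpinf p p * qpinf z p / (qpinf (p * a) p * qpinf (p * c) p) * L.
Proof.
  set (g N r := psum (fun m => double_term (m + r) r) (N - r)).
  assert (Hrho : (0 <= Cmod z / Cmod q < 1)%R).
  { assert (Hq' : (0 < Cmod q)%R) by apply Cmod_gt_0, Hq0.
    split; [apply Rdiv_le_0_compat; [apply Cmod_ge_0 | exact Hq'] |].
    apply Rmult_lt_reg_r with (Cmod q); [exact Hq'|]. unfold Rdiv. rewrite Rmult_assoc, Rinv_l by lra.
    unfold z. lra. }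
  destruct double_term_truncated_column_norm_le as [D HD].
  destruct (tannery _ Hrho D g (fun N => psum (g N) N) column_sum HD) as [L [HL1 HL2]].
  - intros N. apply lim_psum_eventually_0. intros r Hr. unfold g.
    replace (N - r)%nat with O by lia. reflexivity.
  - intros r. apply (lim_reindex _ _ (fun N => N - r)%nat); [|apply column_sum_cvg].
    intros N. exists (N + r)%nat. lia.
  - exists L. split.
    + apply (filterlim_ext (fun N => / 2 * psum (g N) N));
        [|unfold Cdiv; rewrite Cmult_comm; apply lim_scal, HL2].
      intros N. unfold g. rewrite <- psum_swap_triangle.
      rewrite (psum_ext _ (fun n => 2 * rhs_term n)) by (intros; apply double_term_row_sum).
      rewrite psum_scal_l. field.
    + set (ratio := qpinf p p * qpinf z p / (qpinf (p * a) p * qpinf (p * c) p)).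
      apply (filterlim_ext (fun N => ratio * psum column_sum N)); [|apply lim_scal, HL1].
      intros N. rewrite <- psum_scal_l. apply psum_ext. intros r _. unfold ratio.
      assert (HA := qpinf_neq_0 p Hp (p * a) Hqa). assert (HC := qpinf_neq_0 p Hp (p * c) Hqc).
      apply (Cmult_eq_reg_l (qpinf (p * a) p * qpinf (p * c) p)); [|apply Cmult_neq_0; auto].
      transitivity (column_sum r * (qpinf p p * qpinf z p)); [field; auto|].
      rewrite column_sum_eq. ring.
Qed.

End TriangularArray.

Theorem theorem8p2 (q a c : C) :
  (0 < Cmod q)%R -> (Cmod q < 1)%R ->
  a <> 0 -> c <> 0 ->
  (forall k : nat, q ^ 2 * a * pow_n (q ^ 2) k <> 1) ->
  (forall k : nat, q ^ 2 * c * pow_n (q ^ 2) k <> 1) ->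
  (Cmod (a * c) < Cmod q)%R ->
  exists S : C,
    is_series (fun n : nat =>
        (1 - pow_n q (4 * n + 2))
        * (qpoch (q ^ 2 / a) (q ^ 2) n * qpoch (q ^ 2 / c) (q ^ 2) n
           / (qpoch (q ^ 2 * a) (q ^ 2) n * qpoch (q ^ 2 * c) (q ^ 2) n))
        * pow_n (a * c) n
        * inner_sum q n) 
      (2 * (qpinf (q ^ 2) (q ^ 2) * qpinf (a * c) (q ^ 2))
         / (qpinf (q ^ 2 * a) (q ^ 2) * qpinf (q ^ 2 * c) (q ^ 2)) * S)
    /\
    is_series (fun n : nat =>
        qpoch (q ^ 2 / a) (q ^ 2) n * qpoch (q ^ 2 / c) (q ^ 2) n
        / ((1 + pow_n q (2 * n)) * (qpoch (- q) (q ^ 2) n * qpoch (q ^ 2) (q ^ 2) n))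
        * pow_n (- (a * c / q)) n)
      S.
Proof.
  intros Hq_pos Hq Ha Hc Hqa Hqc Hz.
  assert (Hq0 : q <> 0) by (intros E; rewrite E, Cmod_0 in Hq_pos; lra).
  assert (Hqa' : forall k, q ^ 2 * a * (q ^ 2) ^ k <> 1)
    by (intros k; rewrite <- (pow_n_Cpow (q ^ 2) k); exact (Hqa k)).
  assert (Hqc' : forall k, q ^ 2 * c * (q ^ 2) ^ k <> 1)
    by (intros k; rewrite <- (pow_n_Cpow (q ^ 2) k); exact (Hqc k)).
  destruct (lhs_rhs_series_cvg q a c Hq0 Hq Ha Hc Hqa' Hqc' Hz) as [L [Hrhs Hlhs]].
  assert (HA := qpinf_neq_0 _ (Cmod_sq_lt_1 q Hq) _ Hqa').
  assert (HC := qpinf_neq_0 _ (Cmod_sq_lt_1 q Hq) _ Hqc').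
  exists (L / 2). split.
  - apply (is_series_ext (lhs_term q a c)).
    { intros n. unfold lhs_term. repeat f_equal; symmetry; apply pow_n_Cpow. }
    apply is_series_iff_psum.
    replace (2 * _ / _ * (L / 2)) with
      (qpinf (q ^ 2) (q ^ 2) * qpinf (a * c) (q ^ 2)
       / (qpinf (q ^ 2 * a) (q ^ 2) * qpinf (q ^ 2 * c) (q ^ 2)) * L) by (field; auto).
    exact Hlhs.
  - apply (is_series_ext (rhs_term q a c)).
    { intros n. unfold rhs_term. repeat f_equal; symmetry; apply pow_n_Cpow. }
    apply is_series_iff_psum. exact Hrhs.
Qed.
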